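(* Let $m$ be a positive integer. If $C$ is a ternary extremal self-dual code of length $12m$, then $B_{3i}\equiv 0 \pmod 8$ for every $i=m+1,m+2,\ldots,4m$, where $B_{j}$ denotes the number of codewords of weight $j$ in $C$.
   Context: A ternary code of length $n$ is a linear subspace of $\mathbb{F}_3^n$; it is self-dual if it equals its dual with respect to the standard inner product $\sum_k x_k y_k$. The weight of a vector is the number of its nonzero coordinates. A ternary self-dual code of length $n$ is extremal if its minimum (nonzero) weight equals $3\lfloor n/12\rfloor+3$; for length $12m$ this is $3m+3$. *)

From HB Require Import structures.
From mathcomp Require Import all_boot all_order all_algebra.
Set Implicit Arguments. Unset Strict Implicit. Unset Printing Implicit Defensive.
Import GRing.Theory.
Local Open Scope ring_scope.

Notation tvec n := 'rV['F_3]_n.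

Notation tcode n := {vspace tvec n}.

Definition tdot n (x y : tvec n) : 'F_3 := \sum_(k < n) x 0 k * y 0 k.

Definition wt n (x : tvec n) : nat := #|[set k : 'I_n | x 0 k != 0]|.

Definition dual_set n (C : tcode n) : {set tvec n} :=
  [set x : tvec n | [forall y : tvec n, (y \in C) ==> (tdot x y == 0)]].

Definition self_dual n (C : tcode n) : Prop :=
  forall x : tvec n, (x \in C) = (x \in dual_set C).

Definition min_weight_is n (C : tcode n) (d : nat) : Prop :=
  (exists2 x : tvec n, (x \in C) && (x != 0) & wt x = d) /\
  (forall x : tvec n, x \in C -> x != 0 -> (d <= wt x)%N).

Definition extremal n (C : tcode n) : Prop :=
  self_dual C /\ min_weight_is C (3 * (n %/ 12) + 3)%N.

Definition B n (C : tcode n) (j : nat) : nat :=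
  #|[set x : tvec n | (x \in C) && (wt x == j)]|.

From HB Require Import structures.
From mathcomp Require Import all_boot all_order all_algebra.
From mathcomp Require Import all_field ring zify.
Set Implicit Arguments. Unset Strict Implicit. Unset Printing Implicit Defensive.
Import GRing.Theory Num.Theory.
Local Open Scope ring_scope.

(** Write W(X) = \sum_w B_w X^w for the weight enumerator of C, with n = 12m.
  Self-duality gives, through the MacWilliams identity, W = 3^(-n/2) M(W), where
  M is the linear map X^w |-> (1 + 2X)^(n-w) (1 - X)^w; moreover all weights are
  divisible by 3, and extremality fixes the coefficients of W below X^(3m+3).
  These constraints determine W: the difference D of two solutions is divisible
  by X^(3m+3), by (X - 1)^(3m+3) (apply M) and, being a polynomial in X^3, by
  (X - z)^(3m+3) for both primitive cube roots of unity z; as deg D <= 12m, D = 0.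
  On the other hand, triangular elimination in the invariant polynomials
  (1 + 8X^3)^(3(m-j)) (X^3 (1 - X^3)^3)^j produces an integer solution P with
  P = 1 (mod 8). Hence W = P and B_w = 0 (mod 8) for every w > 0. *)

Section MacWilliamsTransform.
Variable R : comNzRingType.
Implicit Types (F G : {poly R}) (n w : nat).

(* Weight enumerators are dehomogenised at x = 1: the MacWilliams transform of
   x^(n-w) y^w is (x + 2y)^(n-w) (x - y)^w, read here at x = 1, y = X. *)
Definition mw_kernel n w : {poly R} := (1 + 'X *+ 2) ^+ (n - w) * (1 - 'X) ^+ w.

Definition mw_transform n F : {poly R} := \sum_(w < n.+1) F`_w *: mw_kernel n w.

Fact mw_transform_is_semilinear n : semilinear (mw_transform n).
Proof.
split=> [c F|F G]; rewrite /mw_transform.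
  by rewrite scaler_sumr; apply: eq_bigr => w _; rewrite coefZ scalerA.
by rewrite -big_split; apply: eq_bigr => w _; rewrite coefD scalerDl.
Qed.
HB.instance Definition _ n := GRing.isSemilinear.Build R {poly R} {poly R} _
  (mw_transform n) (mw_transform_is_semilinear n).

Lemma mw_transformXn n k : (k <= n)%N -> mw_transform n 'X^k = mw_kernel n k.
Proof.
rewrite -ltnS => lt_kn; rewrite /mw_transform (bigD1 (Ordinal lt_kn)) //=.
rewrite coefXn eqxx scale1r big1 ?addr0 // => w ne_wk.
rewrite coefXn; case: eqP => [eq_wk|_]; last by rewrite scale0r.
by case/eqP: ne_wk; apply: val_inj.
Qed.

Lemma mw_kernelD n1 n2 w1 w2 : (w1 <= n1)%N -> (w2 <= n2)%N ->
  mw_kernel (n1 + n2) (w1 + w2) = mw_kernel n1 w1 * mw_kernel n2 w2.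
Proof.
move=> le_w1 le_w2; rewrite /mw_kernel.
have -> : (n1 + n2 - (w1 + w2) = (n1 - w1) + (n2 - w2))%N by lia.
by rewrite !exprD; ring.
Qed.

Lemma poly_sum_coefXn n F : (size F <= n.+1)%N -> F = \sum_(i < n.+1) F`_i *: 'X^i.
Proof. by move=> sF; rewrite -poly_def; apply/esym/take_poly_id. Qed.

Lemma mw_transformM n1 n2 F G : (size F <= n1.+1)%N -> (size G <= n2.+1)%N ->
  mw_transform (n1 + n2) (F * G) = mw_transform n1 F * mw_transform n2 G.
Proof.
move=> sF sG; rewrite {1}(poly_sum_coefXn sF) {1}(poly_sum_coefXn sG).
rewrite mulr_suml linear_sum mulr_suml; apply: eq_bigr => i _.
rewrite mulr_sumr linear_sum mulr_sumr; apply: eq_bigr => j _.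
have le_i : (i <= n1)%N by rewrite -ltnS.
have le_j : (j <= n2)%N by rewrite -ltnS.
rewrite -scalerAl -scalerAr -exprD !linearZ /= !mw_transformXn ?leq_add //.
by rewrite mw_kernelD // -scalerAl -scalerAr.
Qed.

Lemma mw_transform0_1 : mw_transform 0 1 = 1.
Proof. by rewrite /mw_transform big_ord1 coef1 scale1r /mw_kernel !expr0 mulr1. Qed.

Lemma size_exp_leq F n k : (size F <= n.+1)%N -> (size (F ^+ k) <= (n * k).+1)%N.
Proof.
move=> sF; apply: leq_trans (size_poly_exp_leq _ _) _.
by rewrite ltnS leq_mul2r; apply/orP; right; lia.
Qed.

Lemma mw_transformX n F k : (size F <= n.+1)%N ->
  mw_transform (n * k) (F ^+ k) = mw_transform n F ^+ k.
Proof.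
move=> sF; elim: k => [|k IHk]; first by rewrite muln0 !expr0 mw_transform0_1.
by rewrite mulnS !exprS mw_transformM ?size_exp_leq // IHk.
Qed.

Lemma horner1_mw_kernel n w : (mw_kernel n w).[1] = 3%:R ^+ (n - w) * 0 ^+ w.
Proof.
by rewrite hornerM !horner_exp !(hornerD, hornerN, hornerMn, hornerX) -polyC1 !hornerC subrr.
Qed.

Lemma horner1_mw_transform n F : (mw_transform n F).[1] = 3%:R ^+ n * F`_0.
Proof.
rewrite /mw_transform horner_sum big_ord_recl big1 ?addr0 => [|w _].
  by rewrite hornerZ horner1_mw_kernel subn0 expr0 mulr1 mulrC.
by rewrite hornerZ horner1_mw_kernel expr0n mulr0 mulr0.
Qed.

End MacWilliamsTransform.

Lemma map_mw_transform (R S : comNzRingType) (f : {rmorphism R -> S}) n F :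
  map_poly f (mw_transform n F) = mw_transform n (map_poly f F).
Proof.
rewrite rmorph_sum; apply: eq_bigr => w _; rewrite /= map_polyZ coef_map /=.
by rewrite rmorphM !rmorphXn rmorphD rmorphB rmorph1 rmorphMn /= map_polyX.
Qed.

Definition poly_in_X3 (R : nzSemiRingType) (p : {poly R}) :=
  forall w, ~~ (3 %| w)%N -> p`_w = 0.

Lemma poly_in_X3_comp (R : comNzRingType) (q : {poly R}) : poly_in_X3 (q \Po 'X^3).
Proof. by move=> w /negbTE w_ndvd3; rewrite coef_comp_poly_Xn // w_ndvd3. Qed.

Section GleasonPolynomials.
Variable R : comNzRingType.

(* Gleason's generators for ternary self-dual codes: the weight enumerator
   x^4 + 8xy^3 of the tetracode and y^3 (x^3 - y^3)^3. *)
Definition tetracode_enum : {poly R} := 1 + 'X^3 *+ 8.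

Definition gleason_delta : {poly R} := 'X^3 * (1 - 'X^3) ^+ 3.

Definition gleason_basis m j := tetracode_enum ^+ (3 * (m - j)) * gleason_delta ^+ j.

Lemma mw_transform_tetracode : mw_transform 4 tetracode_enum = 3%:R ^+ 2 *: tetracode_enum.
Proof.
rewrite -natrX scaler_nat linearD raddfMn /= -(expr0 'X) !mw_transformXn //.
by rewrite /mw_kernel /tetracode_enum !subnE /=; ring.
Qed.

Lemma mw_transform_delta : mw_transform 12 gleason_delta = 3%:R ^+ 6 *: gleason_delta.
Proof.
have -> : gleason_delta = 'X^3 - 'X^6 *+ 3 + 'X^9 *+ 3 - 'X^12 by rewrite /gleason_delta; ring.
rewrite -natrX scaler_nat !(linearD, linearB, linearN, raddfMn) /= !mw_transformXn //.
by rewrite /mw_kernel !subnE /=; ring.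
Qed.

Lemma size_tetracode : (size tetracode_enum <= 5)%N.
Proof.
rewrite /tetracode_enum -scaler_nat (leq_trans (size_polyD _ _)) // geq_max size_poly1.
by rewrite (leq_trans (size_scale_leq _ _)) // size_polyXn.
Qed.

Lemma size_delta : (size gleason_delta <= 13)%N.
Proof.
have size_1subX3 : size (1 - 'X^3 : {poly R}) = 4%N.
  by rewrite -opprB size_polyN -polyC1 size_XnsubC.
apply: leq_trans (size_polyMleq _ _) _; rewrite size_polyXn.
by rewrite addSn -[13%N]/(3 + (3 * 3).+1)%N leq_add2l size_exp_leq // size_1subX3.
Qed.

Lemma mw_transform_gleason_basis m j : (j <= m)%N ->
  mw_transform (12 * m) (gleason_basis m j) = 3%:R ^+ (6 * m) *: gleason_basis m j.
Proof.
move=> le_jm; have -> : (12 * m = 4 * (3 * (m - j)) + 12 * j)%N by lia.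
rewrite mw_transformM ?size_exp_leq ?size_tetracode ?size_delta //.
rewrite !mw_transformX ?size_tetracode ?size_delta // mw_transform_tetracode.
rewrite mw_transform_delta !exprZn -scalerAl -scalerAr scalerA -!exprM -exprD.
by congr (_ ^+ _ *: _); lia.
Qed.

Lemma size_gleason_basis m j : (j <= m)%N -> (size (gleason_basis m j) <= (12 * m).+1)%N.
Proof.
move=> le_jm; apply: leq_trans (size_polyMleq _ _) _.
have := size_exp_leq (3 * (m - j))%N size_tetracode.
have := size_exp_leq j size_delta; lia.
Qed.

Lemma poly_in_X3_gleason_basis m j : poly_in_X3 (gleason_basis m j).
Proof.
have -> : gleason_basis m j =
    ((1 + 'X *+ 8) ^+ (3 * (m - j)) * ('X * (1 - 'X) ^+ 3) ^+ j) \Po 'X^3.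
  rewrite (rmorphM (comp_poly _)) !(rmorphXn (comp_poly _)) (rmorphM (comp_poly _)).
  rewrite (rmorphXn (comp_poly _)) (rmorphD (comp_poly _)) (rmorphB (comp_poly _)).
  by rewrite (rmorphMn (comp_poly _)) !(rmorph1 (comp_poly _)) /= comp_polyX.
exact: poly_in_X3_comp.
Qed.

Lemma coef_gleason_basis m j w : (w <= 3 * j)%N ->
  (gleason_basis m j)`_w = (w == 3 * j)%:R.
Proof.
move=> le_w; have -> : gleason_basis m j =
    'X^(3 * j) * (tetracode_enum ^+ (3 * (m - j)) * (1 - 'X^3) ^+ (3 * j)).
  by rewrite /gleason_basis /gleason_delta exprMn -!exprM mulrCA.
rewrite coefXnM ltn_neqAle le_w andbT; have [->|//] := eqVneq w (3 * j).
rewrite subnn -horner_coef0 hornerM !horner_exp !(hornerD, hornerN, hornerMn, hornerXn).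
by rewrite -polyC1 !hornerC expr0n /= !addr0 subr0 !expr1n mulr1.
Qed.

End GleasonPolynomials.

(* The basis element of index j is X^(3j) + (higher terms), so subtracting
   multiples of it clears the coefficients of X^3, ..., X^(3m) one at a time;
   each multiplier is a nonconstant coefficient, hence 0 mod 8. *)
Lemma gleason_poly_exists m : exists P : {poly int},
  [/\ mw_transform (12 * m) P = 3%:R ^+ (6 * m) *: P, (size P <= (12 * m).+1)%N,
      poly_in_X3 P, map_poly (intr : int -> 'Z_8) P = 1
    & forall w, (w < 3 * m + 3)%N -> P`_w = (w == 0%N)%:R].
Proof.
pose Q K (P : {poly int}) :=
  [/\ mw_transform (12 * m) P = 3%:R ^+ (6 * m) *: P, (size P <= (12 * m).+1)%N,
      poly_in_X3 P, map_poly (intr : int -> 'Z_8) P = 1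
    & forall k, (k <= K)%N -> P`_(3 * k) = (k == 0%N)%:R].
suff /(_ m (leqnn m))[P [eigP sizeP X3P mod8P coefP]] : forall K, (K <= m)%N -> exists P, Q K P.
  exists P; split=> // w lt_w; have [/dvdnP[k def_w]|ndvd_w] := boolP (3 %| w)%N.
    by rewrite def_w mulnC coefP ?muln_eq0 //; lia.
  by rewrite X3P //; case: eqP ndvd_w => // ->.
elim=> [_|K IHK lt_Km].
  exists (gleason_basis int m 0); split.
  - exact: mw_transform_gleason_basis.
  - exact: size_gleason_basis.
  - exact: poly_in_X3_gleason_basis.
  - rewrite /gleason_basis /tetracode_enum subn0 expr0 mulr1.
    rewrite rmorphXn rmorphD rmorph1 rmorphMn /= map_polyXn -mulr_natr.
    by rewrite -polyC_natr pchar_Zp // mulr0 addr0 expr1n.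
  - by move=> k; rewrite leqn0 => /eqP ->; rewrite coef_gleason_basis.
have [P [eigP sizeP X3P modP coefP]] := IHK (ltnW lt_Km).
set c := P`_(3 * K.+1).
have c_mod8 : intr c = 0 :> 'Z_8 by rewrite -coef_map modP coef1 muln_eq0.
exists (P - c *: gleason_basis int m K.+1); split.
- rewrite linearB linearZ /= mw_transform_gleason_basis // eigP.
  by rewrite scalerBr !scalerA mulrC.
- rewrite (leq_trans (size_polyD _ _)) // geq_max sizeP size_polyN.
  by rewrite (leq_trans (size_scale_leq _ _)) // size_gleason_basis.
- move=> w w_ndvd3; rewrite coefB coefZ X3P // poly_in_X3_gleason_basis //.
  by rewrite mulr0 subr0.
- by rewrite rmorphB /= map_polyZ /= c_mod8 scale0r subr0.
- move=> k le_k; rewrite coefB coefZ coef_gleason_basis ?leq_mul2l ?le_k //.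
  rewrite eqn_mul2l /=; have [->|ne_k] := eqVneq k K.+1; first by rewrite mulr1 subrr.
  by rewrite mulr0 subr0 coefP //; lia.
Qed.

Lemma Xn_dvdp_coef_low (R : idomainType) a (D : {poly R}) :
  (forall w, (w < a)%N -> D`_w = 0) -> 'X^a %| D.
Proof.
move=> lowD; rewrite -(poly_take_drop a D) (_ : take_poly a D = 0) ?add0r ?dvdp_mulIr //.
by apply/polyP => i; rewrite coef_take_poly coef0; case: ifP => // /lowD.
Qed.

Lemma dvdp_mw_transform_low (R : idomainType) n a (F : {poly R}) :
  (forall w, (w < a)%N -> F`_w = 0) -> ('X - 1%:P) ^+ a %| mw_transform n F.
Proof.
move=> lowF; apply: (big_ind (fun p => ('X - 1%:P) ^+ a %| p)) => [|p q|w _].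
- exact: dvdp0.
- exact: dvdp_add.
- have [/lowF->|le_aw] := ltnP w a; first by rewrite scale0r dvdp0.
  rewrite -mul_polyC dvdp_mull // dvdp_mull // -(subnKC le_aw) exprD dvdp_mulr //.
  by rewrite -opprB -scaleN1r polyC1 exprZn dvdpZl ?dvdpp // expf_neq0 // oppr_eq0 oner_eq0.
Qed.

Lemma comp_poly_rot_in_X3 (R : comNzRingType) (D : {poly R}) r :
  r ^+ 3 = 1 -> poly_in_X3 D -> D \Po (r *: 'X) = D.
Proof.
move=> r3 X3D; rewrite comp_polyE -[RHS]coefK poly_def; apply: eq_bigr => i _.
rewrite exprZn scalerA; congr (_ *: _).
have [/dvdnP[k ->]|/X3D->] := boolP (3 %| i)%N; last by rewrite mul0r.
by rewrite mulnC exprM r3 expr1n mulr1.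
Qed.

Lemma XsubC_exp_dvdp_rot (R : fieldType) a (D : {poly R}) r :
  r ^+ 3 = 1 -> poly_in_X3 D -> ('X - 1%:P) ^+ a %| D -> ('X - r%:P) ^+ a %| D.
Proof.
move=> r3 X3D /(dvdp_comp_poly (r^-1 *: 'X)).
have r3' : r^-1 ^+ 3 = 1 by rewrite exprVn r3 invr1.
have nz_r : r != 0 by apply: contra_eq_neq r3 => ->; rewrite expr0n eq_sym oner_neq0.
rewrite [D \Po _]comp_poly_rot_in_X3 // (rmorphXn (comp_poly _)) /=.
rewrite comp_polyB comp_polyX comp_polyC.
have -> : r^-1 *: 'X - 1%:P = r^-1 *: ('X - r%:P).
  by rewrite scalerBr; congr (_ - _); rewrite -mul_polyC -polyCM mulVf.
by rewrite exprZn dvdpZl // expf_neq0 // invr_eq0.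
Qed.

Lemma prod_XsubC_exp_dvdp (R : fieldType) a (s : seq R) (D : {poly R}) : uniq s ->
  (forall r, r \in s -> ('X - r%:P) ^+ a %| D) ->
  (\prod_(r <- s) ('X - r%:P)) ^+ a %| D.
Proof.
elim: s => [|r s IHs] /=; first by rewrite big_nil expr1n dvd1p.
case/andP=> r_notin_s uniq_s dvdD; rewrite big_cons exprMn Gauss_dvdp.
  by rewrite dvdD ?mem_head // IHs // => r' r's; rewrite dvdD // inE r's orbT.
rewrite coprimep_expl // coprimep_expr // coprimep_sym coprimep_XsubC.
by rewrite root_prod_XsubC.
Qed.

Lemma size_prod_XsubC_exp (R : idomainType) a (s : seq R) :
  size ((\prod_(r <- s) ('X - r%:P)) ^+ a) = (size s * a).+1.
Proof.
have nz : \prod_(r <- s) ('X - r%:P) != 0 by rewrite monic_neq0 ?monic_prod_XsubC.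
by rewrite -[LHS]prednK ?size_poly_gt0 ?expf_neq0 // size_exp size_prod_XsubC.
Qed.

(* (X - r)^a divides D for r = 0 (low coefficients), r = 1 (the eigen-equation)
   and r = z, z^2 (D is invariant under X |-> zX); this exceeds the degree of D. *)
Lemma mw_eigen_eq0 (R : fieldType) (z : R) n a c (D : {poly R}) :
  3.-primitive_root z -> c != 0 -> (size D <= n.+1)%N -> (n < 4 * a)%N ->
  (forall w, (w < a)%N -> D`_w = 0) -> poly_in_X3 D ->
  mw_transform n D = c *: D -> D = 0.
Proof.
move=> z_prim nz_c sizeD lt_n4a lowD X3D eigD.
pose s := 0 :: [seq z ^+ k | k <- iota 0 3].
have uniq_s : uniq s.
  have inj_z : {in iota 0 3 &, injective (fun k => z ^+ k)}.
    move=> i j; rewrite !mem_iota => lt_i3 lt_j3 /eqP.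
    by rewrite (eq_prim_root_expr z_prim) !modn_small // => /eqP.
  rewrite cons_uniq (map_inj_in_uniq inj_z) iota_uniq andbT.
  by apply/mapP=> -[k _] /esym/eqP; rewrite expf_eq0 (prim_root_eq0 z_prim) andbF.
have dvdD r : r \in s -> ('X - r%:P) ^+ a %| D.
  rewrite inE => /predU1P[->|/mapP[k _ ->]]; first by rewrite subr0 Xn_dvdp_coef_low.
  apply: XsubC_exp_dvdp_rot => //; first by rewrite exprAC (prim_expr_order z_prim) expr1n.
  by rewrite -(dvdpZr _ _ nz_c) -eigD dvdp_mw_transform_low.
apply/eqP; apply: contraTT lt_n4a => nzD; rewrite -leqNgt.
have := dvdp_leq nzD (prod_XsubC_exp_dvdp uniq_s dvdD).
by rewrite size_prod_XsubC_exp /= => /leq_trans/(_ sizeD).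
Qed.

Lemma mw_eigenvector_unique (R : fieldType) (z : R) n a c (F G : {poly R}) :
  3.-primitive_root z -> c != 0 -> (n < 4 * a)%N ->
  (size F <= n.+1)%N -> (size G <= n.+1)%N ->
  (forall w, (w < a)%N -> F`_w = G`_w) -> poly_in_X3 F -> poly_in_X3 G ->
  mw_transform n F = c *: F -> mw_transform n G = c *: G -> F = G.
Proof.
move=> z_prim nz_c lt_n4a sizeF sizeG lowFG X3F X3G eigF eigG; apply/eqP.
rewrite -subr_eq0; apply/eqP/(mw_eigen_eq0 z_prim nz_c _ lt_n4a).
- by rewrite (leq_trans (size_polyD _ _)) // geq_max sizeF size_polyN.
- by move=> w lt_wa; rewrite coefB lowFG ?subrr.
- by move=> w ndvd_w; rewrite coefB X3F ?X3G ?subrr.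
- by rewrite linearB /= eigF eigG scalerBr.
Qed.

Lemma wt_sum n (x : tvec n) : wt x = (\sum_(k < n) (x 0%R k != 0%R))%N.
Proof. by rewrite /wt -sum1_card big_mkcond; apply: eq_bigr => k _; rewrite inE; case: ifP. Qed.

Lemma wt_le n (x : tvec n) : (wt x <= n)%N.
Proof. by rewrite /wt -[X in (_ <= X)%N]card_ord max_card. Qed.

Lemma wt_eq0 n (x : tvec n) : (wt x == 0%N) = (x == 0).
Proof.
rewrite /wt cards_eq0; apply/eqP/eqP => [x0|->]; last first.
  by apply/setP => k; rewrite !inE mxE eqxx.
by apply/rowP => k; apply/eqP; move/setP/(_ k): x0; rewrite !inE mxE => /negbFE.
Qed.

Lemma prod_if_eq0 (R : comNzRingType) n (x : tvec n) (A A' : R) :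
  \prod_(k < n) (if x 0 k == 0 then A else A') = A ^+ (n - wt x) * A' ^+ wt x.
Proof.
rewrite (bigID (fun k => x 0 k == 0)) /= (eq_bigr (fun _ => A)) => [|k ->//].
rewrite [X in _ * X](eq_bigr (fun _ => A')) => [|k /negbTE->//].
rewrite !prodr_const; congr (_ ^+ _ * _ ^+ _); last by apply: eq_card => k; rewrite !inE.
rewrite -[n in (n - _)%N]card_ord -(cardsC [set k | x 0 k != 0]) /wt addKn.
by apply: eq_card => k; rewrite !inE negbK.
Qed.

Lemma tdotDr n (y x x' : tvec n) : tdot y (x + x') = tdot y x + tdot y x'.
Proof. by rewrite /tdot -big_split; apply: eq_bigr => k _; rewrite mxE mulrDr. Qed.

Lemma sum_F3 (V : nmodType) (g : 'F_3 -> V) : \sum_(b : 'F_3) g b = g 0 + g 1 + g 2.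
Proof.
by rewrite !big_ord_recl big_ord0 addr0 addrA; congr (g _ + g _ + g _); apply: val_inj.
Qed.

Lemma cube_root_sum (R : idomainType) (c : R) : c ^+ 3 = 1 -> c != 1 -> 1 + c + c ^+ 2 = 0.
Proof.
move=> c3 nc1; have : (c - 1) * (1 + c + c ^+ 2) = 0.
  by rewrite -[RHS](subrr 1) -{3}c3; ring.
by move/eqP; rewrite mulf_eq0 subr_eq0 (negbTE nc1) => /eqP.
Qed.

Section TernaryCharacter.
Variables (R : fieldType) (z : R).
Hypothesis z_prim : 3.-primitive_root z.

Definition chi3 (a : 'F_3) : R := z ^+ a.

Lemma chi3_0 : chi3 0 = 1.
Proof. exact: expr0. Qed.

Lemma chi3D a b : chi3 (a + b) = chi3 a * chi3 b.
Proof. by rewrite /chi3 -exprD -[RHS](prim_expr_mod z_prim). Qed.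

Lemma chi3_sum I (r : seq I) (P : pred I) (F : I -> 'F_3) :
  chi3 (\sum_(i <- r | P i) F i) = \prod_(i <- r | P i) chi3 (F i).
Proof. exact: (big_morph _ chi3D chi3_0). Qed.

Lemma chi3_eq1 a : (chi3 a == 1) = (a == 0).
Proof.
rewrite /chi3 -(prim_order_dvd z_prim); apply/idP/eqP => [dvd3a|->]; last exact: dvdn0.
by apply: val_inj; have lt_a3 : (a < 3)%N := ltn_ord a; move: dvd3a => /=; lia.
Qed.

Lemma sum_chi3_coord (x : 'F_3) :
  \sum_(b : 'F_3) chi3 (b * x) *: 'X^(b != 0) = if x == 0 then 1 + 'X *+ 2 else 1 - 'X.
Proof.
rewrite sum_F3 /= mul0r mul1r mulr_natl mulr2n chi3D chi3_0 scale1r expr1 -addrA -scalerDl.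
have [->|nz_x] := eqVneq x 0; first by rewrite chi3_0 mulr1 scalerDl scale1r.
have x3 : chi3 x ^+ 3 = 1 by rewrite /chi3 exprAC (prim_expr_order z_prim) expr1n.
move: (cube_root_sum x3); rewrite chi3_eq1 nz_x => /(_ isT) /eqP.
by rewrite -addrA addrC addr_eq0 expr2 => /eqP ->; rewrite scaleN1r.
Qed.

Lemma sum_chi3_tdot_wt n (x : tvec n) :
  \sum_(y : tvec n) chi3 (tdot y x) *: 'X^(wt y) = mw_kernel R n (wt x).
Proof.
rewrite /mw_kernel -prod_if_eq0.
rewrite [RHS](eq_bigr _ (fun k _ => esym (sum_chi3_coord (x 0 k)))).
rewrite bigA_distr_bigA /=.
pose ffun_of_row (y : tvec n) := [ffun k => y 0 k].
pose row_of_ffun (f : {ffun 'I_n -> 'F_3}) : tvec n := \row_k f k.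
have ffun_of_rowK : cancel ffun_of_row row_of_ffun.
  by move=> y; apply/rowP => k; rewrite mxE ffunE.
have row_of_ffunK : cancel row_of_ffun ffun_of_row.
  by move=> f; apply/ffunP => k; rewrite ffunE mxE.
rewrite (reindex _ (onW_bij _ (Bijective ffun_of_rowK row_of_ffunK))) /=.
apply: eq_bigr => y _; rewrite scaler_prod; congr (_ *: _).
  by rewrite /tdot chi3_sum; apply: eq_bigr => k _; rewrite ffunE.
by rewrite prodrXr wt_sum; congr ('X^_); apply: eq_bigr => k _; rewrite ffunE.
Qed.

Lemma sum_chi3_tdot_dual n (C : tcode n) y :
  y \in dual_set C -> \sum_(x in C) chi3 (tdot y x) = #|C|%:R.
Proof.
rewrite inE => /forallP y_dual; rewrite -sumr_const; apply: eq_bigr => x xC.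
by move/implyP: (y_dual x) => /(_ xC) /eqP ->; rewrite chi3_0.
Qed.

Lemma sum_chi3_tdot_notin_dual n (C : tcode n) y :
  y \notin dual_set C -> \sum_(x in C) chi3 (tdot y x) = 0.
Proof.
rewrite inE negb_forall => /existsP[x0]; rewrite negb_imply => /andP[x0C nz_yx0].
set S := \sum_(x in C) _.
have : S = S * chi3 (tdot y x0).
  rewrite /S mulr_suml (reindex_inj (addIr x0)) /=.
  by apply: eq_big => [x|x _]; rewrite ?rpredDr // tdotDr chi3D.
move/eqP; rewrite -subr_eq0 -{1}[S]mulr1 -mulrBr mulf_eq0 subr_eq0 [1 == _]eq_sym chi3_eq1.
by rewrite (negbTE nz_yx0) orbF => /eqP.
Qed.

Theorem macwilliams_identity n (C : tcode n) :
  #|C|%:R *: \sum_(y in dual_set C) 'X^(wt y) = \sum_(x in C) mw_kernel R n (wt x).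
Proof.
transitivity (\sum_(y : tvec n) (\sum_(x in C) chi3 (tdot y x)) *: 'X^(wt y)).
  rewrite scaler_sumr [RHS](bigID (mem (dual_set C))) /= [X in _ = _ + X]big1 ?addr0.
    by apply: eq_bigr => y y_dual; rewrite sum_chi3_tdot_dual.
  by move=> y y_ndual; rewrite sum_chi3_tdot_notin_dual // scale0r.
under eq_bigr do rewrite scaler_suml.
by rewrite exchange_big; apply: eq_bigr => x _; rewrite sum_chi3_tdot_wt.
Qed.
End TernaryCharacter.

Section CodeWeights.
Variables (n : nat) (C : tcode n).

Lemma B_eq0 w : {in C, forall x, wt x != w} -> B C w = 0%N.
Proof.
move=> no_w; apply/eqP; rewrite cards_eq0; apply/eqP/setP => x; rewrite !inE.
by case: (boolP (x \in C)) => //= /no_w /negbTE.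
Qed.

Lemma B_gt w : (n < w)%N -> B C w = 0%N.
Proof.
by move=> lt_nw; apply: B_eq0 => x _; apply: contraTneq (wt_le x) => ->; rewrite -ltnNge.
Qed.

Lemma B0 : B C 0 = 1%N.
Proof.
rewrite /B (_ : [set x | _] = [set 0]) ?cards1 //; apply/setP => x.
by rewrite !inE wt_eq0; case: eqP => [->|]; rewrite ?mem0v ?andbF.
Qed.

Lemma B_lt_min_weight d w : min_weight_is C d -> (w < d)%N -> B C w = (w == 0%N).
Proof.
case: w => [|w] [_ min_wt] lt_wd; first exact: B0.
apply: B_eq0 => x xC; apply: contraTneq lt_wd => wt_x; rewrite -leqNgt -wt_x.
by apply: min_wt; rewrite // -wt_eq0 wt_x.
Qed.

Lemma tdot_self (x : tvec n) : tdot x x = (wt x)%:R.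
Proof.
have sq (a : 'F_3) : a * a = (a != 0)%:R by case: a => [[|[|[|k]]] lt_a] //; apply/eqP.
by rewrite wt_sum natr_sum; apply: eq_bigr => k _; rewrite sq.
Qed.

Lemma dvdn3_wt_self_dual x : self_dual C -> x \in C -> (3 %| wt x)%N.
Proof.
move=> sdC xC; have := xC; rewrite sdC inE => /forallP/(_ x); rewrite xC tdot_self /=.
by rewrite -(dvdn_pcharf (pchar_Fp (isT : prime 3))).
Qed.

End CodeWeights.

Section WeightEnumerator.
Variables (n : nat) (C : tcode n).

Definition weight_enum (R : nzRingType) : {poly R} := \poly_(w < n.+1) (B C w)%:R.

Lemma coef_weight_enum (R : nzRingType) w : (weight_enum R)`_w = (B C w)%:R.
Proof. by rewrite coef_poly; case: ltnP => // /B_gt ->. Qed.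

Lemma size_weight_enum (R : nzRingType) : (size (weight_enum R) <= n.+1)%N.
Proof. exact: size_poly. Qed.

Lemma sum_wt (V : nmodType) (G : nat -> V) :
  \sum_(x in C) G (wt x) = \sum_(w < n.+1) G w *+ B C w.
Proof.
have wt_inord (x : tvec n) : (inord (wt x) : 'I_n.+1) = wt x :> nat by rewrite inordK ?ltnS ?wt_le.
rewrite (partition_big (fun x => inord (wt x) : 'I_n.+1) xpredT) //=.
apply: eq_bigr => w _; rewrite (eq_bigr (fun _ => G w)) => [|x /andP[_ /eqP<-]]; last first.
  by rewrite wt_inord.
rewrite sumr_const; congr (_ *+ _); apply: eq_card => x; rewrite !inE.
by congr (_ && _); apply/eqP/eqP => [<-|wt_x]; last apply: val_inj; rewrite /= wt_inord.
Qed.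

Lemma weight_enumE (R : nzRingType) : weight_enum R = \sum_(x in C) 'X^(wt x).
Proof. by rewrite sum_wt /weight_enum poly_def; apply: eq_bigr => w _; rewrite scaler_nat. Qed.

Lemma mw_transform_weight_enum (R : comNzRingType) :
  mw_transform n (weight_enum R) = \sum_(x in C) mw_kernel R n (wt x).
Proof.
by rewrite sum_wt; apply: eq_bigr => w _; rewrite coef_weight_enum scaler_nat.
Qed.

Lemma mw_transform_weight_enum_self_dual (R : fieldType) (z : R) :
  3.-primitive_root z -> self_dual C ->
  mw_transform n (weight_enum R) = #|C|%:R *: weight_enum R.
Proof.
move=> z_prim sdC; rewrite mw_transform_weight_enum -(macwilliams_identity z_prim).
by rewrite weight_enumE; congr (_ *: _); apply: eq_bigl => y; rewrite sdC.
Qed.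

Lemma poly_in_X3_weight_enum (R : nzRingType) : self_dual C -> poly_in_X3 (weight_enum R).
Proof.
move=> sdC w ndvd_w; rewrite coef_weight_enum B_eq0 // => x xC.
by apply: contraNneq ndvd_w => <-; apply: dvdn3_wt_self_dual.
Qed.
End WeightEnumerator.

Lemma card_self_dual n (C : tcode n) : self_dual C -> (#|C| ^ 2 = 3 ^ n)%N.
Proof.
move=> sdC; have [z z_prim] := C_prim_root_exists (isT : (0 < 3)%N).
have := congr1 (horner^~ 1) (mw_transform_weight_enum_self_dual z_prim sdC).
rewrite /= horner1_mw_transform coef_weight_enum B0 hornerZ weight_enumE horner_sum.
under eq_bigr do rewrite hornerXn expr1n.
rewrite sumr_const mulr1 -natrX -natrM => /eqP; rewrite eqr_nat => /eqP ->.
by rewrite mulnn.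
Qed.

Lemma extremal_weight_enum m (C : tcode (12 * m)) (P : {poly int}) :
  self_dual C -> min_weight_is C (3 * m + 3) ->
  mw_transform (12 * m) P = 3%:R ^+ (6 * m) *: P -> (size P <= (12 * m).+1)%N ->
  poly_in_X3 P -> (forall w, (w < 3 * m + 3)%N -> P`_w = (w == 0%N)%:R) ->
  weight_enum C algC = map_poly intr P.
Proof.
move=> sdC min_wt eigP sizeP X3P lowP.
have [z z_prim] := C_prim_root_exists (isT : (0 < 3)%N).
have card_C : #|C| = (3 ^ (6 * m))%N.
  apply/eqP; rewrite -(eqn_exp2r _ _ (isT : (0 < 2)%N)) card_self_dual // -expnM.
  by apply/eqP; congr (_ ^ _)%N; lia.
apply: (mw_eigenvector_unique (n := (12 * m)%N) (a := (3 * m + 3)%N)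
  (c := 3%:R ^+ (6 * m)) z_prim).
- by rewrite expf_neq0 // pnatr_eq0.
- lia.
- exact: size_weight_enum.
- by rewrite size_map_inj_poly //; apply: intr_inj.
- move=> w lt_w; rewrite coef_weight_enum coef_map lowP // (B_lt_min_weight min_wt lt_w).
  by rewrite /= rmorph_nat.
- exact: poly_in_X3_weight_enum.
- by move=> w ndvd_w; rewrite coef_map X3P.
- by rewrite (mw_transform_weight_enum_self_dual z_prim sdC) card_C natrX.
- by rewrite -map_mw_transform eigP map_polyZ rmorphXn rmorph_nat.
Qed.

Theorem corollary3p3 (m : nat) (C : tcode (12 * m)) :
  (0 < m)%N -> extremal C ->
  forall i : nat, (m.+1 <= i <= 4 * m)%N -> (8 %| B C (3 * i))%N.
Proof.
move=> m_gt0 [sdC min_wt] i /andP[lt_mi _]; rewrite mulKn // in min_wt.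
have [P [eigP sizeP X3P mod8P lowP]] := gleason_poly_exists m.
have P_B : P`_(3 * i) = (B C (3 * i))%:Z.
  apply: (@intr_inj algC).
  move/(congr1 (fun p : {poly algC} => p`_(3 * i))):
    (extremal_weight_enum sdC min_wt eigP sizeP X3P lowP).
  by rewrite coef_weight_enum coef_map => <-.
have : (B C (3 * i))%:R = 0 :> 'Z_8.
  move/(congr1 (fun p : {poly 'Z_8} => p`_(3 * i))): mod8P.
  by rewrite coef_map P_B coef1 muln_eq0 [i == 0%N]eqn0Ngt (ltn_trans m_gt0 lt_mi); apply.
by move/(congr1 val); rewrite /= val_Zp_nat // => /eqP.
Qed.
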